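(* Let $n\ge 2$, $\pi\in S_n$ and $1\le i\le n-1$ with $\pi_i<\pi_{i+1}$, and let $\tau\in S_n$ be obtained from $\pi$ by exchanging the entries in positions $i$ and $i+1$. Let $\lambda=\lambda(\pi)$ and $\mu=\lambda(\tau)$, with parts $\lambda_1\ge\lambda_2\ge\cdots$ and $\mu_1\ge\mu_2\ge\cdots$ (set $\lambda_m=0$, $\mu_m=0$ for $m$ beyond the number of parts). Then for every $1\le j\le n$, \[\sum_{m=1}^j \mu_m\le \sum_{m=1}^j\lambda_m\le \sum_{m=1}^j\mu_m+1.\]
   Context: Permutations $\pi\in S_n$ are written in one-line notation $\pi=\pi_1\pi_2\cdots\pi_n$. For $\pi\in S_n$, $\lambda(\pi)$ denotes the shape (a partition of $n$) of the pair of standard Young tableaux associated with $\pi$ by the Robinson–Schensted–Knuth (RSK) correspondence. *)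

From mathcomp Require Import all_boot all_order all_fingroup.
Set Implicit Arguments. Unset Strict Implicit. Unset Printing Implicit Defensive.

Fixpoint ins_row (r : seq nat) (x : nat) : seq nat * option nat :=
  match r with
  | [::] => ([:: x], None)
  | y :: r' =>
      if x < y then (x :: r', Some y)
      else let: (r'', b) := ins_row r' x in (y :: r'', b)
  end.

Fixpoint rs_insert (t : seq (seq nat)) (x : nat) : seq (seq nat) :=
  match t with
  | [::] => [:: [:: x]]
  | r :: t' =>
      let: (r', b) := ins_row r x in
      match b with
      | None => r' :: t'
      | Some y => r' :: rs_insert t' y
      end
  end.

Definition P_tableau (w : seq nat) : seq (seq nat) := foldl rs_insert [::] w.

(* One-line notation of pi : 'S_n (values shifted to 0..n-1, which does not
   affect RSK since only relative order matters). *)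
Definition one_line n (pi : 'S_n) : seq nat := [seq val (pi k) | k <- enum 'I_n].

Definition rsk_shape n (pi : 'S_n) : seq nat := map size (P_tableau (one_line pi)).

Definition part_sum (sh : seq nat) (j : nat) : nat := \sum_(m < j) nth 0 sh m.

From mathcomp Require Import all_boot all_order all_fingroup.
From mathcomp Require Import zify.
Set Implicit Arguments. Unset Strict Implicit. Unset Printing Implicit Defensive.

(** By Greene's theorem, lambda_1 + ... + lambda_j is the largest number of
  letters of the word covered by j disjoint weakly increasing subsequences.
  The maximum is invariant under the elementary Knuth relations, the word and
  the reading word of its P-tableau are Knuth equivalent, and on a reading word
  the rows attain the maximum, while the first column, read from bottom to top,
  is strictly decreasing and so meets each subsequence at most once.
  Exchanging an ascent [u v] into [v u]: a cover of the new word cannot put [v]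
  and [u] in the same subsequence, hence is a cover of the old one; a cover of
  the old word becomes one of the new word once [u] is dropped. *)

(* A cover by j subsequences is encoded by labelling each letter: label k < j
  puts the letter into the k-th subsequence, labels >= j leave it uncovered. *)
Definition lclass k (z : seq (nat * nat)) : seq nat :=
  [seq p.1 | p <- z & p.2 == k].

Definition increasing_labelling j z := forall k, k < j -> sorted leq (lclass k z).

Definition covered j (z : seq (nat * nat)) := count (fun p : nat * nat => p.2 < j) z.

Definition cover_le (w w' : seq nat) :=
  forall j z, unzip1 z = w -> increasing_labelling j z ->
  exists z', [/\ unzip1 z' = w', increasing_labelling j z' & covered j z <= covered j z'].

Lemma lclass_cat k s t : lclass k (s ++ t) = lclass k s ++ lclass k t.
Proof. by rewrite /lclass filter_cat map_cat. Qed.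

Lemma lclass_cons k p s :
  lclass k (p :: s) = if p.2 == k then p.1 :: lclass k s else lclass k s.
Proof. by rewrite /lclass /=; case: ifP. Qed.

Lemma covered_cat j s t : covered j (s ++ t) = covered j s + covered j t.
Proof. exact: count_cat. Qed.

Lemma covered_cons j p s : covered j (p :: s) = (p.2 < j) + covered j s.
Proof. by []. Qed.

Lemma sorted_leq_cat_cons (s t : seq nat) x :
  sorted leq (s ++ x :: t) = [&& sorted leq s, last 0 s <= x & path leq x t].
Proof. by case: s => //= a s; rewrite cat_path /= andbA. Qed.

Lemma unzip1_cat (s t : seq (nat * nat)) : unzip1 (s ++ t) = unzip1 s ++ unzip1 t.
Proof. exact: map_cat. Qed.

Lemma unzip1_catP (z : seq (nat * nat)) a b : unzip1 z = a ++ b ->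
  exists a' b', [/\ z = a' ++ b', unzip1 a' = a & unzip1 b' = b].
Proof.
move=> h; exists (take (size a) z), (drop (size a) z); split.
- by rewrite cat_take_drop.
- by rewrite /unzip1 map_take -/(unzip1 z) h take_size_cat.
- by rewrite /unzip1 map_drop -/(unzip1 z) h drop_size_cat.
Qed.

Lemma unzip1_consP (z : seq (nat * nat)) x b : unzip1 z = x :: b ->
  exists l z', z = (x, l) :: z' /\ unzip1 z' = b.
Proof. by case: z => // [[x' l] z'] [<- <-]; exists l, z'. Qed.

Lemma unzip1_cat2P (z : seq (nat * nat)) a b x y : unzip1 z = a ++ x :: y :: b ->
  exists a' b' l1 l2,
    [/\ z = a' ++ (x, l1) :: (y, l2) :: b', unzip1 a' = a & unzip1 b' = b].
Proof.
move=> /unzip1_catP [a' [c [-> ha hc]]].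
have [l1 [c1 [-> hc1]]] := unzip1_consP hc.
have [l2 [c2 [-> hc2]]] := unzip1_consP hc1.
by exists a', c2, l1, l2.
Qed.

Lemma unzip1_cat3P (z : seq (nat * nat)) a b x y t : unzip1 z = a ++ x :: y :: t :: b ->
  exists a' b' l1 l2 l3,
    [/\ z = a' ++ (x, l1) :: (y, l2) :: (t, l3) :: b', unzip1 a' = a & unzip1 b' = b].
Proof.
move=> /unzip1_catP [a' [c [-> ha hc]]].
have [l1 [c1 [-> hc1]]] := unzip1_consP hc.
have [l2 [c2 [-> hc2]]] := unzip1_consP hc1.
have [l3 [c3 [-> hc3]]] := unzip1_consP hc2.
by exists a', c3, l1, l2, l3.
Qed.

Lemma covered_swap j a b p q :
  covered j (a ++ p :: q :: b) = covered j (a ++ q :: p :: b).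
Proof. by rewrite !covered_cat !covered_cons (addnCA (p.2 < j)). Qed.

Lemma increasing_labelling_swap j a b p q : ~~ ((p.2 == q.2) && (p.2 < j)) ->
  increasing_labelling j (a ++ p :: q :: b) -> increasing_labelling j (a ++ q :: p :: b).
Proof.
move=> hpq hz k hk; have := hz k hk; rewrite !lclass_cat !lclass_cons.
case: (eqVneq p.2 k) => [pk|pk]; case: (eqVneq q.2 k) => [qk|qk] //.
by move: hpq; rewrite pk qk eqxx hk.
Qed.

Lemma shared_label_leq j l z a b x y : l < j -> increasing_labelling j z ->
  z = a ++ (x, l) :: (y, l) :: b -> x <= y.
Proof.
move=> hl hz ez; have := hz l hl.
by rewrite ez lclass_cat !lclass_cons /= eqxx sorted_leq_cat_cons => /and3P [_ _ /andP []].
Qed.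

Lemma cover_le_refl w : cover_le w w.
Proof. by move=> j z hz hzl; exists z. Qed.

Lemma cover_le_trans w1 w2 w3 : cover_le w1 w2 -> cover_le w2 w3 -> cover_le w1 w3.
Proof.
move=> h12 h23 j z hz hzl.
have [z' [hz' hzl' hv']] := h12 j z hz hzl.
have [z'' [hz'' hzl'' hv'']] := h23 j z' hz' hzl'.
by exists z''; split => //; exact: leq_trans hv' hv''.
Qed.

Lemma cover_le_swap a b x y :
  (forall j l z a' b', l < j -> increasing_labelling j z ->
     z <> a' ++ (x, l) :: (y, l) :: b') ->
  cover_le (a ++ x :: y :: b) (a ++ y :: x :: b).
Proof.
move=> hxy j z hz hzl.
have [a' [b' [l1 [l2 [ez ha hb]]]]] := unzip1_cat2P hz.
exists (a' ++ (y, l2) :: (x, l1) :: b'); split.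
- by rewrite unzip1_cat /= ha hb.
- apply: (@increasing_labelling_swap j a' b' (x, l1) (y, l2)); last by rewrite -ez.
  by apply/negP => /andP [/= /eqP el hl]; subst l2; exact: (hxy j l1 z a' b').
- by rewrite ez covered_swap.
Qed.

Lemma cover_le_knuthA a b x y t : x < y <= t ->
  cover_le (a ++ [:: y; t; x] ++ b) (a ++ [:: y; x; t] ++ b).
Proof.
move=> /andP [hxy hyt].
have e s : a ++ [:: y & s] ++ b = rcons a y ++ s ++ b by rewrite cat_rcons.
rewrite !e /=.
apply: cover_le_swap => j l z a' b' hl hzl ez.
by have := shared_label_leq hl hzl ez; rewrite leqNgt (leq_trans hxy hyt).
Qed.

Lemma cover_le_knuthB_inv a b x y t : x <= y < t ->
  cover_le (a ++ [:: t; x; y] ++ b) (a ++ [:: x; t; y] ++ b).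
Proof.
move=> /andP [hxy hyt]; apply: cover_le_swap => j l z a' b' hl hzl ez.
by have := shared_label_leq hl hzl ez; rewrite leqNgt (leq_ltn_trans hxy hyt).
Qed.

Definition swap_label (l m k : nat) := if k == l then m else if k == m then l else k.

Definition relabel l m (p : nat * nat) := (p.1, swap_label l m p.2).

Lemma swap_labelK l m : involutive (swap_label l m).
Proof.
move=> k; rewrite /swap_label; case: (eqVneq k l) => [->|kl].
  by rewrite eqxx; case: (eqVneq m l) => [->|ml]; rewrite ?eqxx.
case: (eqVneq k m) => [->|km]; first by rewrite eqxx; case: (eqVneq l m).
by rewrite (negbTE kl) (negbTE km).
Qed.

Lemma lclass_relabel l m k s : lclass k (map (relabel l m) s) = lclass (swap_label l m k) s.
Proof.
elim: s => [//|p s IH]; rewrite /= !lclass_cons /= IH.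
by rewrite (can2_eq (swap_labelK l m) (swap_labelK l m)).
Qed.

Lemma covered_relabel j l m s : l < j -> m < j -> covered j (map (relabel l m) s) = covered j s.
Proof.
move=> hl hm; rewrite /covered count_map; apply: eq_count => p /=.
rewrite /swap_label; case: (eqVneq p.2 l) => [->|_]; first by rewrite hl hm.
by case: (eqVneq p.2 m) => [->|_]; rewrite ?hl ?hm.
Qed.

Lemma unzip1_relabel l m s : unzip1 (map (relabel l m) s) = unzip1 s.
Proof. by rewrite /unzip1 -map_comp. Qed.

(* The relabelling exchanges the tails of the subsequences through [x] and [y]. *)
Lemma knuthA_inv_exchange j a b m l x y t : x < y <= t -> l < j -> m < j ->
  increasing_labelling j (a ++ (y, m) :: (x, l) :: (t, l) :: b) ->
  increasing_labelling j (map (relabel l m) a ++ (y, l) :: (t, l) :: (x, m) :: b).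
Proof.
move=> /andP [hxy hyt] hl hm hz.
have nml : m != l.
  apply: contraTneq hxy => eml; subst m; rewrite -leqNgt.
  exact: (shared_label_leq (a := a) (b := (t, l) :: b) hl hz).
have nlm : l != m by rewrite eq_sym.
have := hz l hl; have := hz m hm.
rewrite !lclass_cat !lclass_cons /= !eqxx (negbTE nml) (negbTE nlm) !sorted_leq_cat_cons /=.
move=> /and3P [hma hmy hmb] /and3P [hla hlx /andP [hxt hlb]] k hk.
have := hz k hk; rewrite !lclass_cat !lclass_cons lclass_relabel /= /swap_label.
case: (eqVneq k l) => [->|nkl].
  by move=> _; rewrite (negbTE nml) sorted_leq_cat_cons /= hma hmy hyt hlb.
case: (eqVneq k m) => [->|//].
by move=> _; rewrite sorted_leq_cat_cons hla hlx (path_le leq_trans (ltnW hxy)).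
Qed.

Lemma knuthA_inv_uncovered j a b m l x y t : x < y <= t -> j <= m ->
  increasing_labelling j (a ++ (y, m) :: (x, l) :: (t, l) :: b) ->
  increasing_labelling j (a ++ (y, l) :: (t, l) :: (x, m) :: b).
Proof.
move=> /andP [hxy hyt] hm hz k hk; have := hz k hk.
have nmk : m != k by rewrite neq_ltn (leq_trans hk hm) orbT.
rewrite !lclass_cat !lclass_cons /= (negbTE nmk); case: (eqVneq l k) => [<-|//].
rewrite !sorted_leq_cat_cons /= => /and3P [hla hlx /andP [_ hlb]].
by rewrite hla (leq_trans hlx (ltnW hxy)) hyt.
Qed.

Lemma cover_le_knuthA_inv a b x y t : x < y <= t ->
  cover_le (a ++ [:: y; x; t] ++ b) (a ++ [:: y; t; x] ++ b).
Proof.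
move=> hxyt j z hz hzl.
have [a' [b' [m [l [l' [ez ha hb]]]]]] := unzip1_cat3P hz.
case: (boolP ((l == l') && (l < j))) => [/andP [/eqP ell hl]|hll]; last first.
  exists (rcons a' (y, m) ++ (t, l') :: (x, l) :: b'); rewrite !cat_rcons; split.
  - by rewrite unzip1_cat /= ha hb.
  - by rewrite -cat_rcons; apply: increasing_labelling_swap; rewrite // cat_rcons -ez.
  - by rewrite ez !covered_cat !covered_cons (addnCA (l < j)).
subst l' z; case: (ltnP m j) => hm.
  exists (map (relabel l m) a' ++ (y, l) :: (t, l) :: (x, m) :: b'); split.
  - by rewrite unzip1_cat unzip1_relabel /= ha hb.
  - exact: knuthA_inv_exchange.
  - by rewrite !covered_cat !covered_cons covered_relabel // hl hm.
exists (a' ++ (y, l) :: (t, l) :: (x, m) :: b'); split.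
- by rewrite unzip1_cat /= ha hb.
- exact: knuthA_inv_uncovered.
- by rewrite !covered_cat !covered_cons hl ltnNge hm /= add0n.
Qed.

(* Reversing a word and complementing its letters maps increasing subsequences to
  increasing subsequences, and exchanges the two elementary Knuth relations. *)
Definition word_dual N (w : seq nat) := rev (map (subn N) w).

Definition labelling_dual N (z : seq (nat * nat)) :=
  rev (map (fun p : nat * nat => (N - p.1, p.2)) z).

Lemma unzip1_dual N z : unzip1 (labelling_dual N z) = word_dual N (unzip1 z).
Proof. by rewrite /unzip1 /word_dual map_rev -!map_comp. Qed.

Lemma lclass_dual N k z : lclass k (labelling_dual N z) = word_dual N (lclass k z).
Proof. by rewrite /lclass /labelling_dual /word_dual filter_rev map_rev filter_map -!map_comp. Qed.

Lemma covered_dual N j z : covered j (labelling_dual N z) = covered j z.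
Proof. by rewrite /covered count_rev count_map. Qed.

Lemma sorted_word_dual N s : sorted leq s -> sorted leq (word_dual N s).
Proof. by move=> hs; rewrite rev_sorted sorted_map; apply: sub_sorted hs => u v; exact: leq_sub2l. Qed.

Lemma increasing_labelling_dual N j z :
  increasing_labelling j z -> increasing_labelling j (labelling_dual N z).
Proof. by move=> hz k hk; rewrite lclass_dual; apply/sorted_word_dual/hz. Qed.

Lemma word_dualK N w : all (leq^~ N) w -> word_dual N (word_dual N w) = w.
Proof.
move=> hw; rewrite /word_dual map_rev revK -map_comp -[RHS]map_id.
by apply/eq_in_map => v /(allP hw) /= /subKn.
Qed.

Lemma cover_le_dual N w w' : all (leq^~ N) w -> all (leq^~ N) w' ->
  cover_le (word_dual N w) (word_dual N w') -> cover_le w w'.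
Proof.
move=> hw hw' hd j z hz hzl.
have [|z' [hz' hzl' hc]] := hd j (labelling_dual N z) _ (increasing_labelling_dual N hzl).
  by rewrite unzip1_dual hz.
exists (labelling_dual N z'); split.
- by rewrite unzip1_dual hz' word_dualK.
- exact: increasing_labelling_dual.
- by rewrite covered_dual -(covered_dual N j z).
Qed.

Lemma leq_sumn_mem s v : v \in s -> v <= sumn s.
Proof.
elim: s => //= u s IH; rewrite inE => /predU1P [->|/IH hv]; first exact: leq_addr.
exact: leq_trans hv (leq_addl _ _).
Qed.

Lemma cover_le_knuthB a b x y t : x <= y < t ->
  cover_le (a ++ [:: x; t; y] ++ b) (a ++ [:: t; x; y] ++ b).
Proof.
move=> /andP [hxy hyt]; set N := sumn (a ++ [:: x; t; y] ++ b).
have hw : all (leq^~ N) (a ++ [:: x; t; y] ++ b) by apply/allP => v /leq_sumn_mem.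
have hw' : all (leq^~ N) (a ++ [:: t; x; y] ++ b).
  apply/allP => v /leq_sumn_mem; rewrite /N !sumn_cat /=; lia.
apply: (cover_le_dual hw hw'); rewrite /word_dual !map_cat !rev_cat -!catA.
apply: cover_le_knuthA_inv; rewrite leq_sub2l // ltn_sub2l //.
by apply: leq_trans hyt _; apply: leq_sumn_mem; rewrite !mem_cat !inE eqxx !orbT.
Qed.

Inductive knuth_eq : seq nat -> seq nat -> Prop :=
| knuth_refl w : knuth_eq w w
| knuth_sym w w' : knuth_eq w w' -> knuth_eq w' w
| knuth_trans w1 w2 w3 : knuth_eq w1 w2 -> knuth_eq w2 w3 -> knuth_eq w1 w3
| knuthA a b x y t : x < y <= t ->
    knuth_eq (a ++ [:: y; t; x] ++ b) (a ++ [:: y; x; t] ++ b)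
| knuthB a b x y t : x <= y < t ->
    knuth_eq (a ++ [:: x; t; y] ++ b) (a ++ [:: t; x; y] ++ b).

Lemma knuth_eq_cover_le w w' : knuth_eq w w' -> cover_le w w' /\ cover_le w' w.
Proof.
elim=> {w w'}.
- by move=> w; split; apply: cover_le_refl.
- by move=> w w' _ [].
- move=> w1 w2 w3 _ [h12 h21] _ [h23 h32].
  by split; [exact: cover_le_trans h12 h23 | exact: cover_le_trans h32 h21].
- by move=> a b x y t h; split; [apply: cover_le_knuthA | apply: cover_le_knuthA_inv].
- by move=> a b x y t h; split; [apply: cover_le_knuthB | apply: cover_le_knuthB_inv].
Qed.

Lemma knuth_eq_cat c d w w' : knuth_eq w w' -> knuth_eq (c ++ w ++ d) (c ++ w' ++ d).
Proof.
have e u a b : c ++ (a ++ u ++ b) ++ d = (c ++ a) ++ u ++ (b ++ d) by rewrite !catA.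
elim=> {w w'}.
- by move=> w; apply: knuth_refl.
- by move=> w w' _; apply: knuth_sym.
- by move=> w1 w2 w3 _ h12 _; apply: knuth_trans.
- by move=> a b x y t h; rewrite !e; apply: knuthA.
- by move=> a b x y t h; rewrite !e; apply: knuthB.
Qed.

Lemma geqn_trans : transitive geq.
Proof. by move=> a b c h1 h2; exact: leq_trans h2 h1. Qed.

Lemma gtn_trans : transitive (fun a b : nat => b < a).
Proof. by move=> a b c h1 h2; exact: ltn_trans h2 h1. Qed.

Lemma knuth_eq_move_left_past_larger x v : forall a t, x < t -> path leq t v ->
  knuth_eq (a ++ t :: v ++ [:: x]) (a ++ t :: x :: v).
Proof.
elim: v => [|h v IH] a t hxt /=; first by move=> _; exact: knuth_refl.
move=> /andP [hth hv].
apply: knuth_trans (_ : knuth_eq (a ++ [:: t] ++ h :: x :: v) _).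
  by have := IH (a ++ [:: t]) h (leq_trans hxt hth) hv; rewrite -!catA.
by apply: (@knuthA a v x t h); rewrite hxt.
Qed.

Lemma knuth_eq_move_left_past_smaller y u : forall c s,
  sorted leq u -> all (leq^~ c) u -> c < y ->
  knuth_eq (u ++ y :: c :: s) (y :: u ++ c :: s).
Proof.
elim/last_ind: u => [|u h IH] c s hu hc hcy /=; first exact: knuth_refl.
rewrite -cats1 -!catA /=.
move: hc; rewrite all_rcons => /andP [hhc hc].
apply: knuth_trans (_ : knuth_eq (u ++ y :: h :: c :: s) _).
  by apply: (@knuthB u s h c y); rewrite hhc hcy.
have hu' := subseq_sorted leq_trans (subseq_rcons u h) hu.
have hh : all (leq^~ h) u.
  by move: hu; rewrite -rev_sorted rev_rcons /= => /(order_path_min geqn_trans); rewrite all_rev.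
exact: IH h (c :: s) hu' hh (leq_ltn_trans hhc hcy).
Qed.

Definition bump_index x (r : seq nat) := find (fun v => x < v) r.

Lemma ins_rowE r x : ins_row r x =
  if bump_index x r < size r
  then (set_nth 0 r (bump_index x r) x, Some (nth 0 r (bump_index x r)))
  else (rcons r x, None).
Proof.
rewrite /bump_index; elim: r => [//|y r IH] /=.
by case: ifP => hxy //=; rewrite IH ltnS; case: ifP.
Qed.

Lemma before_bump_index x r i : i < bump_index x r -> nth 0 r i <= x.
Proof. by move/(before_find 0)/negbT; rewrite -leqNgt. Qed.

Lemma nth_bump_index x r : bump_index x r < size r -> x < nth 0 r (bump_index x r).
Proof. by rewrite -has_find => /(nth_find 0). Qed.

Lemma knuth_eq_ins_row r x : sorted leq r -> bump_index x r < size r ->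
  knuth_eq (r ++ [:: x]) (nth 0 r (bump_index x r) :: set_nth 0 r (bump_index x r) x).
Proof.
set p := bump_index x r => hr hp; have hx := nth_bump_index hp.
rewrite set_nthE hp.
have er : r = take p r ++ nth 0 r p :: drop p.+1 r by rewrite -drop_nth // cat_take_drop.
rewrite {1}er -catA /=.
apply: knuth_trans (_ : knuth_eq (take p r ++ nth 0 r p :: x :: drop p.+1 r) _).
  apply: knuth_eq_move_left_past_larger => //.
  by move: hr; rewrite {1}er sorted_cat_cons => /andP [].
apply: knuth_eq_move_left_past_smaller => //.
- exact: (subseq_sorted leq_trans (take_subseq r p) hr).
- apply/(all_nthP 0) => i; rewrite size_take hp => hi.
  by rewrite nth_take //; apply: before_bump_index.
Qed.

Fixpoint reading_word {A : Type} (t : seq (seq A)) : seq A :=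
  if t is r :: t' then reading_word t' ++ r else [::].

Lemma knuth_eq_rs_insert t x : all (sorted leq) t ->
  knuth_eq (reading_word t ++ [:: x]) (reading_word (rs_insert t x)).
Proof.
elim: t x => [|r t IH] x /=; first by move=> _; exact: knuth_refl.
move=> /andP [hr ht]; rewrite ins_rowE; case: ifP => hp; last first.
  by rewrite /= -cats1 catA; exact: knuth_refl.
set y := nth 0 r _; set r' := set_nth 0 r _ x.
apply: knuth_trans (_ : knuth_eq (reading_word t ++ [:: y] ++ r') _).
  by rewrite -catA; have := knuth_eq_cat (reading_word t) [::] (knuth_eq_ins_row hr hp); rewrite !cats0.
by rewrite catA; have := knuth_eq_cat [::] r' (IH y ht).
Qed.

Definition column_strict (u r : seq nat) :=
  size r <= size u /\ forall c, c < size r -> nth 0 u c < nth 0 r c.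

Fixpoint is_tableau (t : seq (seq nat)) : Prop :=
  if t is r :: t' then [/\ sorted leq r, column_strict r (head [::] t') & is_tableau t']
  else True.

Lemma is_tableau_sorted t : is_tableau t -> all (sorted leq) t.
Proof. by elim: t => //= r t IH [-> _ /IH]. Qed.

Section Bump.

Variables (r s : seq nat) (x : nat).
Hypotheses (hr : sorted leq r) (hp : bump_index x r < size r).
Let p := bump_index x r.

Lemma sorted_bump : sorted leq (set_nth 0 r p x).
Proof.
apply/(sortedP 0) => i; rewrite size_set_nth (maxn_idPr hp) => hi.
have /(sortedP 0) hsr := hr.
rewrite !nth_set_nth /=; move: hi; case: (eqVneq i p) => [-> hi|_ hi].
  rewrite (gtn_eqF (ltnSn p)); exact: ltnW (leq_trans (nth_bump_index hp) (hsr p hi)).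
case: (eqVneq i.+1 p) => [eip|_]; last exact: hsr.
by apply: before_bump_index; rewrite -/p -eip.
Qed.

Hypothesis hrs : column_strict r s.

(* The bumped entry lands in the next row at a position weakly left of [p]. *)
Lemma column_strict_bump :
  column_strict (set_nth 0 r p x) (ins_row s (nth 0 r p)).1.
Proof.
set y := nth 0 r p; have hxy : x < y := nth_bump_index hp.
set q := bump_index y s.
have hqp : q <= p.
  case: (ltnP p (size s)) => hps; last exact: leq_trans (find_size _ _) hps.
  rewrite leqNgt; apply/negP => /before_bump_index.
  by rewrite leqNgt (hrs.2 p hps).
have hxq : nth 0 (set_nth 0 r p x) q < y.
  rewrite nth_set_nth /=; case: ifP => [_|/negbT nqp]; first exact: hxy.
  by apply: leq_ltn_trans hxy; apply: before_bump_index; rewrite ltn_neqAle nqp hqp.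
have hlt c : c < size s -> nth 0 (set_nth 0 r p x) c < nth 0 s c.
  move=> hc; rewrite nth_set_nth /=; case: (eqVneq c p) => [ecp|_]; last exact: hrs.2.
  by rewrite ecp in hc *; exact: ltn_trans hxy (hrs.2 p hc).
rewrite ins_rowE -/q; case: ifP => hq /=.
  split; first by rewrite !size_set_nth (maxn_idPr hq) (maxn_idPr hp); exact: hrs.1.
  move=> c; rewrite size_set_nth (maxn_idPr hq) => hc.
  rewrite [in X in _ < X]nth_set_nth /=.
  by case: (eqVneq c q) => [->|_]; [exact: hxq | exact: hlt].
have eqs : q = size s by apply/eqP; rewrite eqn_leq find_size leqNgt hq.
split; first by rewrite size_rcons size_set_nth (maxn_idPr hp) -eqs; exact: leq_ltn_trans hqp hp.
move=> c; rewrite size_rcons ltnS => hc; rewrite [in X in _ < X]nth_rcons.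
case: (ltngtP c (size s)) => hcs; [exact: hlt | by move: hc; rewrite leqNgt hcs |].
by rewrite hcs -eqs.
Qed.

End Bump.

Lemma sorted_rcons_no_bump r x : sorted leq r -> size r <= bump_index x r ->
  sorted leq (rcons r x).
Proof.
case: r => [//|h r] /= hr hb; rewrite rcons_path hr /=.
have := @before_bump_index x (h :: r) (size r) (leq_trans (ltnSn _) hb).
by rewrite (nth_last 0 (h :: r)).
Qed.

Lemma column_strict_rcons u r x : column_strict u r -> column_strict (rcons u x) r.
Proof.
move=> [hs hlt]; split; first by rewrite size_rcons leqW.
by move=> c hc; rewrite nth_rcons (leq_trans hc hs); exact: hlt.
Qed.

Lemma is_tableau_rs_insert t x : is_tableau t -> is_tableau (rs_insert t x).
Proof.
elim: t x => [//|r t IH] x /= [hr hrt ht]; rewrite ins_rowE; case: ifP => hp.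
  split; [exact: sorted_bump | | exact: IH].
  case: t IH hrt ht => [|s t] IH hrt ht /=.
    split; first by rewrite size_set_nth (maxn_idPr hp); case: (size r) hp.
    case=> // _; rewrite nth_set_nth /=; case: ifP => [_|/negbT h0].
      exact: nth_bump_index.
    by apply: leq_ltn_trans (nth_bump_index hp); apply: before_bump_index; rewrite lt0n eq_sym.
  by have := column_strict_bump hp hrt; case: (ins_row s _) => s' [y|].
split => //; last by case: t hrt {IH ht} => //= s t; exact: column_strict_rcons.
by apply: sorted_rcons_no_bump; rewrite // leqNgt hp.
Qed.

Lemma is_tableau_P w : is_tableau (P_tableau w).
Proof.
elim/last_ind: w => [//|w x IH].
by rewrite /P_tableau foldl_rcons; apply: is_tableau_rs_insert.
Qed.

Lemma knuth_eq_reading_P w : knuth_eq w (reading_word (P_tableau w)).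
Proof.
elim/last_ind: w => [|w x IH]; first exact: knuth_refl.
rewrite /P_tableau foldl_rcons -/(P_tableau w) -cats1.
apply: knuth_trans (_ : knuth_eq (reading_word (P_tableau w) ++ [:: x]) _).
  by have := knuth_eq_cat [::] [:: x] IH.
by apply/knuth_eq_rs_insert/is_tableau_sorted/is_tableau_P.
Qed.

Lemma part_sum0 s : part_sum s 0 = 0.
Proof. exact: big_ord0. Qed.

Lemma part_sumS a s j : part_sum (a :: s) j.+1 = a + part_sum s j.
Proof. exact: big_ord_recl. Qed.

Lemma part_sum_nil j : part_sum [::] j = 0.
Proof. by rewrite /part_sum big1 // => i _; rewrite nth_nil. Qed.

Fixpoint row_labelling (t : seq (seq nat)) m0 : seq (nat * nat) :=
  if t is r :: t' then row_labelling t' m0.+1 ++ [seq (v, m0) | v <- r] else [::].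

Lemma unzip1_row_labelling t m0 : unzip1 (row_labelling t m0) = reading_word t.
Proof.
elim: t m0 => [//|r t IH] m0 /=; rewrite unzip1_cat IH; congr (_ ++ _).
by rewrite /unzip1 -map_comp map_id.
Qed.

Lemma lclass_row_labelling k t m0 :
  lclass k (row_labelling t m0) = if m0 <= k then nth [::] t (k - m0) else [::].
Proof.
elim: t m0 => [|r t IH] m0 /=; first by case: ifP; rewrite ?nth_nil.
have hr : lclass k [seq (v, m0) | v <- r] = if m0 == k then r else [::].
  by elim: r => [|v r IHr]; [case: (m0 == k) | rewrite lclass_cons IHr /=; case: (m0 == k)].
rewrite lclass_cat IH hr; case: (ltngtP m0 k) => h //; last by rewrite h subnn.
by rewrite cats0 -(subnSK h).
Qed.

Lemma covered_row_labelling j t m0 :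
  covered j (row_labelling t m0) = part_sum (map size t) (j - m0).
Proof.
elim: t m0 => [|r t IH] m0 /=; first by rewrite part_sum_nil.
rewrite covered_cat IH /covered count_map /=; case: (ltnP m0 j) => h.
  by rewrite -(subnSK h) part_sumS addnC (eq_count (a2 := predT)) ?count_predT // => v /=.
have [-> ->] : j - m0 = 0 /\ j - m0.+1 = 0 by split; apply/eqP; rewrite subn_eq0 // ltnW.
rewrite !part_sum0 (eq_count (a2 := pred0)) ?count_pred0 // => v /=.
by rewrite ltnNge h.
Qed.

Lemma tableau_cover_attained j t : is_tableau t ->
  exists z, [/\ unzip1 z = reading_word t, increasing_labelling j z
            & covered j z = part_sum (map size t) j].
Proof.
move=> ht; exists (row_labelling t 0); split.
- exact: unzip1_row_labelling.
- move=> k _; rewrite lclass_row_labelling subn0 /=.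
  case: (ltnP k (size t)) => hkt; last by rewrite nth_default.
  by apply: (allP (is_tableau_sorted ht)); rewrite mem_nth.
- by rewrite covered_row_labelling subn0.
Qed.

Lemma map_reading_word (A B : Type) (f : A -> B) (Z : seq (seq A)) :
  map f (reading_word Z) = reading_word (map (map f) Z).
Proof. by elim: Z => //= r Z IH; rewrite map_cat IH. Qed.

Lemma reading_word_subseq (f : seq (nat * nat) -> seq (nat * nat)) Z :
  (forall r, subseq (f r) r) -> subseq (reading_word (map f Z)) (reading_word Z).
Proof. by move=> hf; elim: Z => //= r Z IH; apply: cat_subseq. Qed.

Lemma unzip1_reading_wordP t (z : seq (nat * nat)) : unzip1 z = reading_word t ->
  exists Z, map (map fst) Z = t /\ reading_word Z = z.
Proof.
elim: t z => [|r t IH] z /=; first by case: z => // _; exists [::].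
move=> /unzip1_catP [z1 [z2 [-> h1 h2]]].
have [Z [e1 e2]] := IH z1 h1.
by exists (z2 :: Z); rewrite /= e1 e2 -h2.
Qed.

Lemma increasing_labelling_subseq j z1 z2 :
  subseq z1 z2 -> increasing_labelling j z2 -> increasing_labelling j z1.
Proof.
move=> hs hz k hk; apply: (subseq_sorted leq_trans _ (hz k hk)); apply: map_subseq.
by rewrite subseq_filter filter_all (subseq_trans (filter_subseq _ _) hs).
Qed.

Lemma column_strict_head a u r :
  column_strict (a :: u) r -> all (fun v => a < v) (take 1 r).
Proof. by case: r => [|b r] [_ h] //=; rewrite take0 andbT (h 0). Qed.

Lemma first_column_gt h t : is_tableau t -> all (fun v => h < v) (take 1 (head [::] t)) ->
  all (fun v => h < v) (reading_word (map (take 1) t)).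
Proof.
elim: t h => [//|s t IH] h /= [_ hst ht] hh; rewrite all_cat hh andbT.
case: s hst hh => [|a s] hst hh.
  by apply: IH => //; case: t hst {ht} => [|[|b r] t] //= [].
have /= /andP [ha _] := hh; apply: sub_all (IH a ht (column_strict_head hst)) => v.
exact: ltn_trans.
Qed.

Lemma first_column_decreasing t :
  is_tableau t -> sorted (fun a b => b < a) (reading_word (map (take 1) t)).
Proof.
elim: t => //= s t IH [_ hst ht]; case: s hst => [|a s] hst /=; first by rewrite cats0 IH.
rewrite take0 (sorted_pairwise gtn_trans) pairwise_cat -(sorted_pairwise gtn_trans) IH //= !andbT.
by rewrite allrel1r; apply: first_column_gt ht (column_strict_head hst).
Qed.

Lemma covered_sum_lclass j s : covered j s = \sum_(k < j) size (lclass k s).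
Proof.
elim: j => [|j IH]; first by rewrite big_ord0 /covered (eq_count (a2 := pred0)) ?count_pred0.
rewrite big_ord_recr /= -IH /lclass size_map size_filter -count_predUI.
rewrite (eq_count (a1 := predI _ _) (a2 := pred0)) ?count_pred0 ?addn0.
  by apply: eq_count => p /=; rewrite ltnS leq_eqVlt orbC.
by move=> p /=; case: (eqVneq p.2 j) => [->|]; rewrite ?ltnn ?andbF.
Qed.

Lemma covered_decreasing j z : increasing_labelling j z ->
  sorted (fun a b => b < a) (unzip1 z) -> covered j z <= j.
Proof.
move=> hz hdec; rewrite covered_sum_lclass -[j in _ <= j]card_ord -sum1_card.
apply: leq_sum => k _.
have : sorted (fun a b => b < a) (lclass k z).
  exact: (subseq_sorted gtn_trans (map_subseq _ (filter_subseq _ _)) hdec).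
case: (lclass k z) (hz k (ltn_ord k)) => [|a [|b s]] //= /andP [hab _] /andP [hba _].
by move: hab; rewrite leqNgt hba.
Qed.

Lemma sum_nonzero_parts sh j : sorted geq sh ->
  \sum_(m < j) (0 < nth 0 sh m) = minn j (count (leq 1) sh).
Proof.
elim: sh j => [|a sh IH] j hs; first by rewrite minn0 big1 // => m _; rewrite nth_nil.
case: j => [|j]; first by rewrite big_ord0 min0n.
rewrite big_ord_recl /= (IH j (path_sorted hs)); case: a hs => [|a] hs /=; last first.
  by rewrite add1n minnSS.
suff -> : count (leq 1) sh = 0 by rewrite minn0.
have /allP hsh0 := order_path_min geqn_trans hs.
by apply/eqP; rewrite eqn0Ngt -has_count; apply/hasPn => b /hsh0; rewrite /= leqn0 => /eqP ->.
Qed.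

Lemma is_tableau_shape_sorted t : is_tableau t -> sorted geq (map size t).
Proof.
elim: t => //= r t IH [_ hrt ht]; have := IH ht.
by case: t hrt {IH ht} => //= s t [hs _] ->; rewrite hs.
Qed.

Lemma size_first_column (t : seq (seq nat)) :
  size (reading_word (map (take 1) t)) = count (leq 1) (map size t).
Proof. by elim: t => //= r t IH; rewrite size_cat IH addnC; case: r => [|a [|b r]]. Qed.

Lemma covered_first_column j t (Z : seq (seq (nat * nat))) :
  is_tableau t -> map (map fst) Z = t ->
  increasing_labelling j (reading_word (map (take 1) Z)) ->
  covered j (reading_word (map (take 1) Z)) <= \sum_(m < j) (0 < nth 0 (map size t) m).
Proof.
move=> ht hZ hz.
have hu : unzip1 (reading_word (map (take 1) Z)) = reading_word (map (take 1) t).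
  rewrite /unzip1 map_reading_word -map_comp -hZ -map_comp.
  by congr reading_word; apply: eq_map => r /=; rewrite map_take.
rewrite sum_nonzero_parts ?is_tableau_shape_sorted // leq_min.
rewrite covered_decreasing ?hu ?first_column_decreasing //=.
by rewrite (leq_trans (count_size _ _)) // -size_first_column -hu size_map.
Qed.

Lemma covered_split_first_column j (Z : seq (seq (nat * nat))) :
  covered j (reading_word Z) =
  covered j (reading_word (map (take 1) Z)) + covered j (reading_word (map (drop 1) Z)).
Proof.
elim: Z => //= r Z IH; rewrite !covered_cat IH -{1}(cat_take_drop 1 r) covered_cat.
by rewrite addnACA.
Qed.

Lemma is_tableau_drop1 t : is_tableau t -> is_tableau (map (drop 1) t).
Proof.
elim: t => //= r t IH [hr hrt ht]; split; [exact: drop_sorted | | exact: IH].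
case: t hrt {IH ht} => [//|s t] /= [hs hlt]; split; first by rewrite !size_drop leq_sub2r.
by move=> c; rewrite size_drop => hc; rewrite !nth_drop; apply: hlt; lia.
Qed.

Lemma part_sum_split_first_column (t : seq (seq nat)) j :
  part_sum (map size t) j =
  part_sum (map size (map (drop 1) t)) j + \sum_(m < j) (0 < nth 0 (map size t) m).
Proof.
rewrite /part_sum -big_split; apply: eq_bigr => m _ /=.
case: (ltnP m (size t)) => hm; last by rewrite !nth_default ?size_map.
by rewrite !(nth_map [::]) ?size_map //= size_drop; case: (size _) => // k; rewrite subn1 addn1.
Qed.

Lemma tableau_cover_bound j t (Z : seq (seq (nat * nat))) :
  is_tableau t -> map (map fst) Z = t -> increasing_labelling j (reading_word Z) ->
  covered j (reading_word Z) <= part_sum (map size t) j.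
Proof.
have [N] : exists N, all (fun r => size r <= N) t.
  by exists (sumn (map size t)); apply/allP => r hr; apply/leq_sumn_mem/map_f.
elim: N t Z => [|N IH] t Z hN ht hZ hz.
  suff -> : reading_word Z = [::] by [].
  apply/nilP; rewrite /nilp -(size_map fst) map_reading_word hZ.
  by elim: t hN {ht hZ} => //= r t IHt /andP [hr /IHt /eqP hrt]; rewrite size_cat hrt -leqn0.
rewrite covered_split_first_column part_sum_split_first_column addnC leq_add //.
  apply: IH.
  - by rewrite all_map; apply: sub_all hN => r /=; rewrite size_drop leq_subLR add1n.
  - exact: is_tableau_drop1.
  - by rewrite -hZ -!map_comp; apply: eq_map => r /=; rewrite map_drop.
  - by apply: increasing_labelling_subseq hz; apply: reading_word_subseq => r; exact: drop_subseq.
apply: covered_first_column => //; apply: increasing_labelling_subseq hz.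
by apply: reading_word_subseq => r; exact: take_subseq.
Qed.

Definition shape_sum j w := part_sum (map size (P_tableau w)) j.

Lemma greene_attained j w : exists z,
  [/\ unzip1 z = w, increasing_labelling j z & shape_sum j w <= covered j z].
Proof.
have [_ hPw] := knuth_eq_cover_le (knuth_eq_reading_P w).
have [z [hz hzl hc]] := tableau_cover_attained j (is_tableau_P w).
have [z' [hz' hzl' hc']] := hPw j z hz hzl.
by exists z'; rewrite /shape_sum -hc.
Qed.

Lemma greene_bound j w z : unzip1 z = w -> increasing_labelling j z ->
  covered j z <= shape_sum j w.
Proof.
move=> hz hzl; have [hwP _] := knuth_eq_cover_le (knuth_eq_reading_P w).
have [z' [hz' hzl' hc]] := hwP j z hz hzl.
have [Z [hZ ez']] := unzip1_reading_wordP hz'; subst z'.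
exact: leq_trans hc (tableau_cover_bound (is_tableau_P w) hZ hzl').
Qed.

Lemma increasing_labelling_uncover j a b x l l' : j <= l' ->
  increasing_labelling j (a ++ (x, l) :: b) -> increasing_labelling j (a ++ (x, l') :: b).
Proof.
move=> hl' hz k hk; have := hz k hk; rewrite !lclass_cat !lclass_cons /=.
have -> : (l' == k) = false by apply/negbTE; rewrite neq_ltn (leq_trans hk hl') orbT.
case: (l == k) => //; apply: (subseq_sorted leq_trans).
exact: cat_subseq (subseq_refl _) (subseq_cons _ _).
Qed.

Lemma shape_sum_swap_le j a b u v : u < v ->
  shape_sum j (a ++ v :: u :: b) <= shape_sum j (a ++ u :: v :: b).
Proof.
move=> huv; have [z [hz hzl hc]] := greene_attained j (a ++ v :: u :: b).
have [a' [b' [l1 [l2 [ez ha hb]]]]] := unzip1_cat2P hz.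
apply: leq_trans hc _; rewrite ez covered_swap.
apply: greene_bound; first by rewrite unzip1_cat /= ha hb.
apply: increasing_labelling_swap; last by rewrite -ez.
apply/negP => /andP [/= /eqP el hl]; subst l2.
by have := shared_label_leq hl hzl ez; rewrite leqNgt huv.
Qed.

Lemma shape_sum_swap_ge j a b u v : u < v ->
  shape_sum j (a ++ u :: v :: b) <= (shape_sum j (a ++ v :: u :: b)).+1.
Proof.
move=> huv; have [z [hz hzl hc]] := greene_attained j (a ++ u :: v :: b).
have [a' [b' [l1 [l2 [ez ha hb]]]]] := unzip1_cat2P hz.
have hw : unzip1 (a' ++ (v, l2) :: (u, l1) :: b') = a ++ v :: u :: b.
  by rewrite unzip1_cat /= ha hb.
apply: leq_trans hc _; case: (boolP ((l1 == l2) && (l1 < j))) => hl12; last first.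
  rewrite ez covered_swap leqW // (greene_bound hw) //.
  by apply: increasing_labelling_swap; rewrite // -ez.
move: hl12 => /andP [/eqP el hl]; subst l2.
have hz' : increasing_labelling j (a' ++ (v, l1) :: (u, j) :: b').
  apply: (@increasing_labelling_swap _ _ _ (u, j)); first by rewrite ltnn andbF.
  by apply: (@increasing_labelling_uncover j a' _ u l1); rewrite -?ez.
have := greene_bound (w := a ++ v :: u :: b) _ hz'; rewrite unzip1_cat /= ha hb.
by rewrite ez !covered_cat !covered_cons /= hl ltnn => /(_ erefl); lia.
Qed.

Lemma nth_one_line n (s : 'S_n) (k : 'I_n) : nth 0 (one_line s) k = val (s k).
Proof. by rewrite /one_line (nth_map k) ?size_enum_ord // nth_ord_enum. Qed.

Lemma size_one_line n (s : 'S_n) : size (one_line s) = n.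
Proof. by rewrite /one_line size_map size_enum_ord. Qed.

Lemma val_tperm n (x y k : 'I_n) : val (tperm x y k) = swap_label x y k.
Proof.
rewrite /swap_label !val_eqE; case: tpermP => [->|->|/eqP/negbTE -> /eqP/negbTE ->] //.
  by rewrite eqxx.
by case: (eqVneq y x) => [->|_]; rewrite ?eqxx.
Qed.

Lemma nth_swap_adjacent (w : seq nat) i k : i.+1 < size w ->
  nth 0 (take i w ++ nth 0 w i.+1 :: nth 0 w i :: drop i.+2 w) k = nth 0 w (swap_label i i.+1 k).
Proof.
move=> hi; rewrite nth_cat size_take (ltnW hi) /swap_label.
case: (ltngtP k i) => hki; first by rewrite nth_take // (ltn_eqF (leqW hki)).
  case: (eqVneq k i.+1) => [->|nk]; first by rewrite subSnn.
  rewrite -(subnSK hki) /= -(subnSK (_ : i.+1 < k)) /= ?nth_drop; last by rewrite ltn_neqAle eq_sym nk.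
  by rewrite subnKC // ltn_neqAle eq_sym nk.
by rewrite hki subnn.
Qed.

Lemma one_line_split n (s : 'S_n) (i0 i1 : 'I_n) : val i1 = i0.+1 ->
  one_line s = take i0 (one_line s) ++ val (s i0) :: val (s i1) :: drop i0.+2 (one_line s).
Proof.
move=> hi; rewrite -!nth_one_line -hi -drop_nth ?size_one_line // hi -drop_nth.
  by rewrite cat_take_drop.
by rewrite size_one_line.
Qed.

Lemma one_line_swap_adjacent n (pi tau : 'S_n) (i0 i1 : 'I_n) : val i1 = i0.+1 ->
  (forall k, tau k = pi (tperm i0 i1 k)) ->
  one_line tau = take i0 (one_line pi) ++ val (pi i1) :: val (pi i0) :: drop i0.+2 (one_line pi).
Proof.
move=> hi htau; have hi1 : i0.+1 < n by rewrite -hi ltn_ord.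
apply: (@eq_from_nth _ 0).
  by rewrite size_cat size_take !size_one_line (ltnW hi1) /= size_drop size_one_line; lia.
move=> k; rewrite size_one_line => hk.
rewrite -!nth_one_line hi nth_swap_adjacent ?size_one_line // -hi.
by rewrite (nth_one_line _ (Ordinal hk)) htau -nth_one_line val_tperm.
Qed.

Theorem proposition3 (n : nat) (hn : 2 <= n) (pi tau : 'S_n) (i0 i1 : 'I_n)
  (hi : val i1 = (val i0).+1)
  (hasc : val (pi i0) < val (pi i1))
  (htau : forall k : 'I_n, tau k = pi (tperm i0 i1 k)) :
  forall j : nat, 1 <= j <= n ->
    part_sum (rsk_shape tau) j <= part_sum (rsk_shape pi) j
    /\ part_sum (rsk_shape pi) j <= (part_sum (rsk_shape tau) j).+1.
Proof.
move=> j _; set a := take i0 (one_line pi); set b := drop i0.+2 (one_line pi).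
have := shape_sum_swap_le j a b hasc; have := shape_sum_swap_ge j a b hasc.
by rewrite -(one_line_split pi hi) -(one_line_swap_adjacent hi htau).
Qed.
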